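(* Let $G=\prod_{i=1}^t K_{n_i}$ with all $n_i\ge 2$, and regard $\{0,1\}^t\subseteq V(G)$. Let $M\subseteq\{0,1\}^t$ be a set such that no two distinct vectors in $M$ agree in exactly $t-1$ coordinates, and no two vectors in $M$ differ in all $t$ coordinates. Then $\{0,1\}^t\setminus M$ is a dominating set of $G$.
   Context: $K_m$ is the complete graph on $m$ vertices; vertices of the direct product $\prod_{i=1}^t K_{n_i}$ are tuples $(x_1,\dots,x_t)$ with $x_i\in\{0,\dots,n_i-1\}$, two tuples being adjacent iff they differ in every coordinate. A set $D$ is dominating if every vertex is in $D$ or adjacent to a vertex of $D$. *)

From mathcomp Require Import all_boot.
Set Implicit Arguments. Unset Strict Implicit. Unset Printing Implicit Defensive.

Definition is_vertex (t : nat) (n : 'I_t -> nat) (x : 'I_t -> nat) : Prop :=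
  forall i, x i < n i.

(* Adjacency in the direct product of complete graphs: differ in every coordinate. *)
Definition prodK_adj (t : nat) (x y : 'I_t -> nat) : Prop :=
  forall i, x i <> y i.

Definition dominating (t : nat) (n : 'I_t -> nat) (D : ('I_t -> nat) -> Prop) : Prop :=
  (forall x, D x -> is_vertex n x) /\
  forall x, is_vertex n x -> D x \/ exists y, D y /\ prodK_adj x y.

Definition bin_vertex (t : nat) (b : {ffun 'I_t -> bool}) : 'I_t -> nat :=
  fun i => nat_of_bool (b i).

Definition agree (t : nat) (a b : {ffun 'I_t -> bool}) : nat :=
  #|[set i | a i == b i]|.

(* Let [c] be the binary vector with [c i] true exactly where [x i = 0].
   Its image is adjacent to every vertex [x], and so is the image of any [d]
   that agrees with [c] on the coordinates where [x] is binary.  If [c] is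
   outside [M] it dominates [x].  Otherwise: when [x] is binary, [x] is the
   complement of [c], which lies outside [M] because complementary vectors
   agree nowhere; when some [x j >= 2], flipping [c] at [j] gives a vector
   agreeing with [c] in exactly [t - 1] coordinates, hence outside [M], and
   still adjacent to [x]. *)
From Stdlib Require Import FunctionalExtensionality.
From mathcomp Require Import all_boot.

Set Implicit Arguments. Unset Strict Implicit. Unset Printing Implicit Defensive.

Section BinaryVectors.

Variable t : nat.
Implicit Types (b c d : {ffun 'I_t -> bool}) (x : 'I_t -> nat).

Definition ffun_compl b : {ffun 'I_t -> bool} := [ffun i => ~~ b i].

Definition ffun_flip (j : 'I_t) b : {ffun 'I_t -> bool} :=
  [ffun i => (i == j) (+) b i].

Lemma agree_compl b : agree b (ffun_compl b) = 0.
Proof.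
rewrite /agree (_ : [set i | _] = set0) ?cards0 //.
by apply/setP => i; rewrite !inE ffunE; case: (b i).
Qed.

Lemma agree_flip j b : agree b (ffun_flip j b) = t.-1.
Proof.
rewrite /agree (_ : [set i | _] = [set~ j]) ?cardsC1 ?card_ord //.
by apply/setP => i; rewrite !inE ffunE; case: (i == j); case: (b i).
Qed.

Lemma ffun_flip_neq j b : b != ffun_flip j b.
Proof.
apply/eqP => /(congr1 (fun f : {ffun 'I_t -> bool} => f j)).
by rewrite ffunE eqxx; case: (b j).
Qed.

Lemma bin_vertex_is_vertex (n : 'I_t -> nat) b :
  (forall i, 2 <= n i) -> is_vertex n (bin_vertex b).
Proof. by rewrite /is_vertex /bin_vertex => hn i; apply: leq_trans (hn i); case: (b i). Qed.

Lemma prodK_adj_bin_vertex x d :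
  (forall i, x i <= 1 -> d i = (x i == 0)) -> prodK_adj x (bin_vertex d).
Proof.
rewrite /prodK_adj /bin_vertex => hd i.
case: (leqP (x i) 1) => [/hd -> | ]; first by case: (x i) => [|[|]].
by case: (d i); case: (x i) => [|[|]].
Qed.

Lemma binary_bin_vertex x :
  (forall i, x i <= 1) -> x = bin_vertex (ffun_compl [ffun i => x i == 0]).
Proof.
move=> hx; apply: functional_extensionality => i.
by rewrite /bin_vertex !ffunE; move: (hx i); case: (x i) => [|[|]].
Qed.

End BinaryVectors.

Theorem theorem4p4 (t : nat) (n : 'I_t -> nat) (hn : forall i, 2 <= n i)
  (M : {set {ffun 'I_t -> bool}})
  (hM1 : forall a b, a \in M -> b \in M -> a != b -> agree a b <> t.-1)
  (hM2 : forall a b, a \in M -> b \in M -> agree a b <> 0) :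
  dominating n (fun x => exists2 b : {ffun 'I_t -> bool}, b \notin M & x = bin_vertex b).
Proof.
split=> [x [b _ ->] | x _]; first exact: bin_vertex_is_vertex.
pose c := [ffun i => x i == 0].
have c_adj : prodK_adj x (bin_vertex c) by apply: prodK_adj_bin_vertex => i _; rewrite ffunE.
have [cM | cNM] := boolP (c \in M); last by right; exists (bin_vertex c); split=> //; exists c.
have [/forallP x_bin | /forallPn [j xj]] := boolP [forall i, x i <= 1].
  left; exists (ffun_compl c); last exact: binary_bin_vertex.
  by apply/negP => /(hM2 _ _ cM); rewrite agree_compl.
right; exists (bin_vertex (ffun_flip j c)); split.
  exists (ffun_flip j c) => //; apply/negP => flipM.
  exact: hM1 cM flipM (ffun_flip_neq j c) (agree_flip j c).
apply: prodK_adj_bin_vertex => i xi; rewrite !ffunE.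
by case: (eqVneq i j) => [eij | _] //; rewrite -eij xi in xj.
Qed.
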